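(* Let $G_1$ and $G_2$ be connected graphs, where $G_1$ has at least two vertices. Then $$\chi_d^t(G_1\star G_2)\leq |V(G_1)|+|V(G_2)|.$$
   Context: All graphs are simple and finite. A total dominator coloring (TD-coloring) of a graph $G$ with no isolated vertex is a proper vertex coloring of $G$ in which every vertex of $G$ is adjacent to every vertex of some color class (a color class being the set of all vertices receiving a given color). The total dominator chromatic number (TDC-number) $\chi_d^t(G)$ is the minimum number of colors in a TD-coloring of $G$. The neighbourhood corona $G_1\star G_2$ of graphs $G_1$ and $G_2$ is the graph obtained by taking one copy of $G_1$ and $|V(G_1)|$ copies of $G_2$, and, for each $i$, joining every neighbour (in $G_1$) of the $i$-th vertex of $G_1$ to every vertex of the $i$-th copy of $G_2$. *)

From mathcomp Require Import all_boot.
Set Implicit Arguments. Unset Strict Implicit. Unset Printing Implicit Defensive.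

Definition simple_graph (T : finType) (e : rel T) : Prop :=
  symmetric e /\ irreflexive e.

Definition connected_graph (T : finType) (e : rel T) : Prop :=
  0 < #|T| /\ forall x y : T, connect e x y.

Definition no_isolated (T : finType) (e : rel T) : bool :=
  [forall v, exists w, e v w].

Definition proper_coloring (T : finType) (e : rel T) (k : nat)
  (c : T -> 'I_k) : bool :=
  [forall x, forall y, e x y ==> (c x != c y)].

Definition td_coloring (T : finType) (e : rel T) (k : nat)
  (c : T -> 'I_k) : bool :=
  proper_coloring e c &&
  [forall v, exists j : 'I_k,
     [exists w, c w == j] && [forall w, (c w == j) ==> e v w]].

Definition td_colorable (T : finType) (e : rel T) (k : nat) : bool :=
  [exists c : {ffun T -> 'I_k}, td_coloring e c].

(* When G has no
   isolated vertex, #|T| colours always suffice, so this is the minimum. *)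
Definition tdc_number (T : finType) (e : rel T) : nat :=
  find (td_colorable e) (iota 0 #|T|.+1).

(* Neighbourhood corona G1 * G2: vertices are the vertices of G1 (inl) and
   pairs (i, a) = vertex a of the i-th copy of G2 (inr). *)
Definition ncorona_rel (T1 T2 : finType) (e1 : rel T1) (e2 : rel T2)
  : rel (T1 + (T1 * T2)) :=
  fun x y =>
    match x, y with
    | inl u, inl v => e1 u v
    | inr (i, a), inr (j, b) => (i == j) && e2 a b
    | inl u, inr (i, _) => e1 u i
    | inr (i, _), inl u => e1 i u
    end.

(* Colour the copy of G1 injectively with |V(G1)| colours and every copy of
   G2 with the same |V(G2)| further colours, vertex a of each copy receiving
   colour a.  This is proper: copies are independent of each other, and an
   edge inside a copy comes from an edge of G2.  Every colour of a vertex of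
   G1 is a singleton class, and every vertex of the corona has a neighbour in
   G1 (the copy of G2 at i is joined to the neighbours of i, and i has one
   since G1 is connected with two vertices), so each vertex totally dominates
   such a class. *)

From mathcomp Require Import all_boot.

Set Implicit Arguments.
Unset Strict Implicit.
Unset Printing Implicit Defensive.

Lemma connected_neighbor (T : finType) (e : rel T) :
  connected_graph e -> 1 < #|T| -> forall u, exists v, e u v.
Proof.
move=> [_ connect_e] /card_gt1P [x [y [_ _ neq_xy]]] u.
have [w neq_wu] : exists w, w != u.
  by case: (eqVneq x u) => [<-|]; [exists y; rewrite eq_sym | exists x].
have /connectP [[|v p] /= path_uvp last_w] := connect_e u w.
  by rewrite last_w eqxx in neq_wu.
by exists v; case/andP: path_uvp.
Qed.

Lemma tdc_number_le (T : finType) (e : rel T) (k : nat) :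
  k <= #|T| -> td_colorable e k -> tdc_number e <= k.
Proof.
move=> le_kT col_k; rewrite /tdc_number -ltnS; apply: find_ltn.
rewrite take_iota (minn_idPl _) ?ltnS //; apply/hasP.
by exists k; rewrite // mem_iota add0n ltnS leqnn.
Qed.

Lemma td_coloring_singleton_class (T : finType) (e : rel T) (k : nat)
    (c : T -> 'I_k) :
  proper_coloring e c ->
  (forall v, exists2 w, e v w & forall x, c x = c w -> x = w) ->
  td_coloring e c.
Proof.
move=> proper_c dom_c; rewrite /td_coloring proper_c /=.
apply/forallP => v; have [w e_vw class_w] := dom_c v.
apply/existsP; exists (c w); apply/andP; split.
  by apply/existsP; exists w.
by apply/forallP => x; apply/implyP => /eqP/class_w ->.
Qed.

Section NeighbourhoodCorona.

Variables (T1 T2 : finType) (e1 : rel T1) (e2 : rel T2).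

Definition ncorona_coloring (x : T1 + T1 * T2) : 'I_(#|T1| + #|T2|) :=
  match x with
  | inl u => lshift #|T2| (enum_rank u)
  | inr (_, a) => rshift #|T1| (enum_rank a)
  end.

Lemma ncorona_coloring_proper :
  irreflexive e1 -> irreflexive e2 ->
  proper_coloring (ncorona_rel e1 e2) ncorona_coloring.
Proof.
move=> irr1 irr2; apply/forallP => x; apply/forallP => y; apply/implyP.
case: x => [u|[i a]]; case: y => [v|[j b]] //= e_xy; rewrite eq_shift //.
- by apply: contraTneq e_xy => /enum_rank_inj ->; rewrite irr1.
- by apply: contraTneq e_xy => /enum_rank_inj ->; rewrite irr2 andbF.
Qed.

Lemma ncorona_coloring_base_class (v : T1) x :
  ncorona_coloring x = ncorona_coloring (inl v) -> x = inl v.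
Proof.
case: x => [u|[i a]] /= /eqP; rewrite eq_shift // => /eqP.
by move/enum_rank_inj->.
Qed.

Lemma ncorona_base_neighbor :
  (forall u, exists v, e1 u v) ->
  forall x, exists v, ncorona_rel e1 e2 x (inl v).
Proof. by move=> nbr1 [u|[i a]] /=; apply: nbr1. Qed.

Lemma ncorona_td_colorable :
  irreflexive e1 -> irreflexive e2 -> (forall u, exists v, e1 u v) ->
  td_colorable (ncorona_rel e1 e2) (#|T1| + #|T2|).
Proof.
move=> irr1 irr2 nbr1; apply/existsP; exists (finfun ncorona_coloring).
apply: td_coloring_singleton_class => [|x].
  have /forallP proper_c := ncorona_coloring_proper irr1 irr2.
  apply/forallP => x; apply/forallP => y; rewrite !ffunE.
  exact: forallP (proper_c x) y.
have [v e_xv] := ncorona_base_neighbor nbr1 x.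
by exists (inl v) => // y; rewrite !ffunE; apply: ncorona_coloring_base_class.
Qed.

Lemma leq_card_ncorona : 0 < #|T1| -> 0 < #|T2| ->
  #|T1| + #|T2| <= #|{: T1 + T1 * T2}|.
Proof.
move=> T1_gt0 T2_gt0; rewrite card_sum card_prod leq_add2l.
by rewrite -{1}[#|T2|]mul1n leq_mul2r T1_gt0 orbT.
Qed.

End NeighbourhoodCorona.

Theorem theorem1 (T1 T2 : finType) (e1 : rel T1) (e2 : rel T2) :
  simple_graph e1 -> simple_graph e2 ->
  connected_graph e1 -> connected_graph e2 ->
  1 < #|T1| ->
  tdc_number (ncorona_rel e1 e2) <= #|T1| + #|T2|.
Proof.
move=> [_ irr1] [_ irr2] conn1 [T2_gt0 _] T1_gt1.
apply: tdc_number_le.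
  by apply: leq_card_ncorona => //; apply: ltnW.
exact: ncorona_td_colorable irr1 irr2 (connected_neighbor conn1 T1_gt1).
Qed.
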